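(* Let $f=a_0+ a_{1}z+\cdots+a_m z^m\in \mathbb{Z}[z]$ be primitive (the greatest common divisor of its coefficients is $1$). Suppose there exist positive real numbers $\alpha<\beta$ and an index $j\in \{0,1,\ldots,m\}$ such that \[ |a_j|\alpha^j >\left(\frac{\beta}{\alpha}\right)^{m-j}\sum_{i=0,\, i\neq j}^{m} |a_i|\alpha^i. \] If there exist natural numbers $n$ and $d$ with $\beta-d\geq n\geq \alpha+d$ such that either $|f(n)|/d$ is a prime, or $|f(n)|/d$ is a prime power coprime to $|f'(n)|$, then $f$ is irreducible in $\mathbb{Z}[z]$.
   Context: $f'$ denotes the derivative of $f$. Natural numbers are positive integers. *)

From HB Require Import structures.
From mathcomp Require Import all_boot all_order all_algebra.
From mathcomp Require Export reals.
Set Implicit Arguments. Unset Strict Implicit. Unset Printing Implicit Defensive.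
Import Order.TTheory GRing.Theory Num.Theory.
Local Open Scope ring_scope.

Definition primitive (f : {poly int}) : Prop :=
  (\big[gcdn/0%N]_(i < size f) absz (f`_i)%R)%N = 1%N.

Definition irreducible_Zz (f : {poly int}) : Prop :=
  f != 0 /\ f \isn't a GRing.unit /\
  forall g h : {poly int}, f = g * h -> g \is a GRing.unit \/ h \is a GRing.unit.

Definition prime_power (q : nat) : Prop :=
  exists p k : nat, prime p /\ (0 < k)%N /\ q = (p ^ k)%N.

(* Proof: the dominance hypothesis makes the j-th term of f outweigh all the
   others on the annulus alpha <= |z| <= beta, so f has no complex root there.
   Since n lies at distance at least d from both boundary circles, every root z
   of f satisfies |n - z| > d, hence |g(n)| = |lc g| * prod |n - z| > d for every
   nonconstant factor g of f.  If f = g h with g, h nonconstant, then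
   q d = |g(n)| |h(n)| for q = |f(n)|/d with both factors > d, so q divides
   neither factor.  Thus q is not prime, and if q = p^k then p divides both
   factors (otherwise p^k would divide one of them), hence also
   f'(n) = g'(n) h(n) + g(n) h'(n), contradicting coprimality.  Constant factors
   of the primitive polynomial f are units. *)

From HB Require Import structures.
From mathcomp Require Import all_boot all_order all_algebra.
From mathcomp Require Import reals complex ring lra.
Set Implicit Arguments. Unset Strict Implicit. Unset Printing Implicit Defensive.
Import Order.TTheory GRing.Theory Num.Theory.
Local Open Scope ring_scope.

Lemma ler_expr_mixed (R : realFieldType) (x y : R) (i j m : nat) :
  1 <= x -> x <= y -> (i <= m)%N -> x ^+ i <= x ^+ j * y ^+ (m - j).
Proof.
move=> x_ge1 x_le_y i_le_m; have y_ge1 := le_trans x_ge1 x_le_y.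
have [i_le_j|j_lt_i] := leqP i j.
  apply: le_trans (ler_weXn2l x_ge1 i_le_j) _.
  by rewrite ler_peMr ?exprn_ege1 ?exprn_ge0 // (le_trans ler01).
rewrite -(subnKC (ltnW j_lt_i)) exprD ler_wpM2l ?exprn_ge0 ?(le_trans ler01) //.
apply: le_trans (ler_weXn2l y_ge1 (leq_sub2r j i_le_m)).
by apply: lerXn2r; rewrite // nnegrE (le_trans ler01).
Qed.

Lemma dominant_term_on_annulus (R : realFieldType) (a : nat -> R) (m j : nat)
    (alpha beta r : R) :
  0 < alpha -> alpha <= r -> r <= beta -> (forall i, 0 <= a i) ->
  (beta / alpha) ^+ (m - j) * \sum_(i < m.+1 | (i : nat) != j) a i * alpha ^+ i
    < a j * alpha ^+ j ->
  \sum_(i < m.+1 | (i : nat) != j) a i * r ^+ i < a j * r ^+ j.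
Proof.
move=> alpha_gt0 alpha_le_r r_le_beta a_ge0 dom.
set x := r / alpha; set y := beta / alpha.
have x_ge1 : 1 <= x by rewrite /x ler_pdivlMr // mul1r.
have x_le_y : x <= y by rewrite /x /y ler_pM2r // invr_gt0.
have rE : r = alpha * x by rewrite /x mulrC divfK // gt_eqF.
set K := x ^+ j * y ^+ (m - j).
apply: (@le_lt_trans _ _ (K * \sum_(i < m.+1 | (i : nat) != j) a i * alpha ^+ i)).
  rewrite mulr_sumr; apply: ler_sum => i _.
  rewrite rE exprMn [X in X <= _]mulrA [X in _ <= X]mulrC.
  apply: ler_wpM2l; first by rewrite mulr_ge0 ?exprn_ge0 ?(ltW alpha_gt0).
  by rewrite ler_expr_mixed // -ltnS.
have -> : a j * r ^+ j = x ^+ j * (a j * alpha ^+ j) by rewrite rE exprMn; ring.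
rewrite /K -mulrA ltr_pM2l //.
by rewrite exprn_gt0 // (lt_le_trans ltr01).
Qed.

Lemma dominant_term_nonroot (C : numDomainType) (p : {poly C}) (z : C) (j : nat) :
  (j < size p)%N ->
  \sum_(i < size p | (i : nat) != j) `|p`_i| * `|z| ^+ i < `|p`_j| * `|z| ^+ j ->
  ~~ root p z.
Proof.
move=> j_lt dom; apply/negP => /rootP.
rewrite horner_coef (bigD1 (Ordinal j_lt)) //= => /eqP; rewrite addr_eq0 => /eqP pjE.
suff : `|p`_j| * `|z| ^+ j <= \sum_(i < size p | (i : nat) != j) `|p`_i| * `|z| ^+ i.
  by move/(lt_le_trans dom); rewrite ltxx.
rewrite -normrX -normrM pjE normrN; apply: le_trans (ler_norm_sum _ _ _) _.
by apply: ler_sum => i _; rewrite normrM normrX.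
Qed.

Lemma roots_far_norm_horner_gt (C : numClosedFieldType) (p : {poly C}) (x d : C) :
  (1 < size p)%N -> 1 <= `|lead_coef p| -> 1 <= d ->
  (forall z, root p z -> d < `|x - z|) -> d < `|p.[x]|.
Proof.
move=> p_gt1 lead_ge1 d_ge1 far.
have d_ge0 := le_trans ler01 d_ge1.
have lead_neq0 : lead_coef p != 0.
  by rewrite -normr_eq0 gt_eqF // (lt_le_trans ltr01).
have [rs pE] := closed_field_poly_normal p.
have rs_size : (0 < size rs)%N.
  by move: p_gt1; rewrite pE size_scale // size_prod_XsubC.
rewrite pE hornerZ horner_prod normrM normr_prod.
apply: lt_le_trans (ler_peMl _ lead_ge1); last exact: prodr_ge0.
apply: le_lt_trans (ler_eXnr rs_size d_ge1) _.
rewrite -iter_mulr_1 -count_predT -big_const_seq !big_seq.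
apply: ltr_prod => [|z z_rs]; first by case: rs {pE} rs_size => // z rs _; rewrite /= mem_head.
by rewrite d_ge0 hornerXsubC far // pE rootZ // root_prod_XsubC.
Qed.

Section DominantCoefficient.

Variables (R : rcfType) (f : {poly int}) (alpha beta : R) (j : nat).
Hypothesis alpha_gt0 : 0 < alpha.
Hypothesis j_le : (j <= (size f).-1)%N.
Hypothesis dominant :
  (beta / alpha) ^+ ((size f).-1 - j) *
    \sum_(i < (size f).-1.+1 | (i : nat) != j) `|f`_i|%:~R * alpha ^+ i
  < `|f`_j|%:~R * alpha ^+ j.

Local Notation fC := (map_poly (intr : int -> R[i]) f).

Lemma dominant_poly_neq0 : f != 0.
Proof.
apply: contraTneq dominant => ->; rewrite coef0 normr0 mul0r big1 ?mulr0 ?ltxx //.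
by move=> i _; rewrite coef0 normr0 mul0r.
Qed.

Lemma root_norm_off_annulus (z : R[i]) (r : R) :
  root fC z -> `|z| = r%:C%C -> r < alpha \/ beta < r.
Proof.
move=> fz zE; have [|alpha_le_r] := ltP r alpha; first by left.
have [|r_le_beta] := ltP beta r; first by right.
have size_fC : size fC = (size f).-1.+1.
  by rewrite size_map_inj_poly ?prednK ?size_poly_gt0 ?dominant_poly_neq0 //; exact: intr_inj.
have termE i : `|fC`_i| * `|z| ^+ i = ((`|f`_i|%:~R * r ^+ i)%:C)%C.
  by rewrite coef_map /= zE rmorphM rmorphXn /= rmorph_int intr_norm.
exfalso; move: fz; apply/negP; apply: (@dominant_term_nonroot _ _ _ j); first by rewrite size_fC.
rewrite size_fC termE; under eq_bigr do rewrite termE.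
rewrite -rmorph_sum ltcR.
apply: (@dominant_term_on_annulus _ (fun i => `|f`_i|%:~R)) dominant => // i.
Qed.

Lemma root_far_from_nat (z : R[i]) (n d : nat) :
  alpha + d%:R <= n%:R -> n%:R <= beta - d%:R -> root fC z -> d%:R < `|n%:R - z|.
Proof.
move=> n_ge n_le fz; have /complex_realP[r zE] := normr_real z.
have natC k : (k%:R : R[i]) = (k%:R : R)%:C%C by rewrite rmorph_nat.
have [r_lt|r_gt] := root_norm_off_annulus fz zE; last rewrite distrC;
  apply: (lt_le_trans _ (lerB_dist _ _));
  by rewrite normr_nat zE !natC -rmorphB ltcR; lra.
Qed.

Lemma factor_horner_gt (g h : {poly int}) (n d : nat) :
  (0 < d)%N -> alpha + d%:R <= n%:R -> n%:R <= beta - d%:R ->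
  f = g * h -> (1 < size g)%N -> (d < `|g.[n%:Z]|)%N.
Proof.
move=> d_gt0 n_ge n_le fE g_gt1.
have g_neq0 : g != 0 by rewrite -size_poly_gt0 (ltn_trans _ g_gt1).
set gC := map_poly (intr : int -> R[i]) g.
have gC_far : d%:R < `|gC.[n%:R]|.
  apply: roots_far_norm_horner_gt; first by rewrite size_map_inj_poly //; exact: intr_inj.
  - rewrite lead_coef_map_inj //; last exact: intr_inj.
    by rewrite -intr_norm ler1z norm_intr_ge1 ?intr_int ?lead_coef_eq0.
  - by rewrite ler1n.
  move=> z gz; apply: root_far_from_nat => //.
  by rewrite fE rmorphM rootM gz.
move: gC_far; rewrite -[n%:R]/((n%:Z)%:~R : R[i]) horner_map /= -intr_norm -abszE.
by rewrite -[d%:R]/((d%:Z)%:~R : R[i]) ltr_int ltz_nat.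
Qed.

End DominantCoefficient.

Lemma cofactor_ndvdn (A B d q : nat) :
  (0 < d)%N -> (d < A)%N -> (d < B)%N -> (q * d = A * B)%N -> ~~ (q %| A)%N.
Proof.
move=> d_gt0 d_lt_A d_lt_B qdE; apply/negP => /dvdnP[u AE].
have q_gt0 : (0 < q)%N by rewrite lt0n; apply: contraTneq d_lt_A => q0; rewrite AE q0 muln0.
have dE : d = (u * B)%N.
  by apply/eqP; rewrite -(eqn_pmul2l q_gt0) qdE AE mulnAC mulnC.
move: d_lt_B; rewrite dE ltnNge leq_pmull //.
by move: d_gt0; rewrite dE muln_gt0 => /andP[].
Qed.

Lemma prime_power_quotient_dvdn_both (A B d p k : nat) :
  (0 < d)%N -> (d < A)%N -> (d < B)%N -> prime p -> (0 < k)%N ->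
  (p ^ k * d = A * B)%N -> (p %| A)%N && (p %| B)%N.
Proof.
move=> d_gt0 d_lt_A d_lt_B p_prime k_gt0 qdE.
have pk_dvd : (p ^ k %| A * B)%N by rewrite -qdE dvdn_mulr.
have pk_coprime C : ~~ (p %| C)%N -> coprime (p ^ k) C.
  by move=> p_ndvd; rewrite coprime_pexpl // prime_coprime.
apply/andP; split; apply/negPn/negP => /pk_coprime pk_C.
- move: pk_dvd; rewrite Gauss_dvdr //; apply/negP.
  by apply: cofactor_ndvdn d_gt0 d_lt_B d_lt_A _; rewrite qdE mulnC.
- move: pk_dvd; rewrite Gauss_dvdl //; apply/negP.
  exact: cofactor_ndvdn d_gt0 d_lt_A d_lt_B qdE.
Qed.


Lemma prime_power_gt1 (q : nat) : prime_power q -> (1 < q)%N.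
Proof.
move=> [p [k [p_prime [k_gt0 ->]]]].
by rewrite -[1%N](expn0 p) ltn_exp2l ?prime_gt1.
Qed.

Lemma dvdz_horner_derivM (g h : {poly int}) (x c : int) :
  (c %| g.[x])%Z -> (c %| h.[x])%Z -> (c %| (g * h)^`().[x])%Z.
Proof.
move=> c_g c_h; rewrite derivM hornerD !hornerM.
by apply: rpredD; [apply: dvdz_mull | apply: dvdz_mulr].
Qed.

Lemma absz_horner_unit (p : {poly int}) (x : int) :
  p \is a GRing.unit -> `|p.[x]|%N = 1%N.
Proof.
move=> /(rmorph_unit (horner_eval x)); rewrite unfold_in /= horner_evalE.
by case/orP=> /eqP ->.
Qed.

Lemma primitive_constant_factor_unit (f g h : {poly int}) :
  primitive f -> f = g * h -> (size g <= 1)%N -> g \is a GRing.unit.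
Proof.
move=> prim fE g_le1; move: fE; rewrite (size1_polyC g_le1); set c := g`_0 => fE.
have : (`|c| %| 1)%N.
  by rewrite -prim; apply/dvdn_biggcdP => -[i _] _ /=; rewrite fE coefCM abszM dvdn_mulr.
rewrite dvdn1 poly_unitE coefC size_polyC /=.
by case: c {fE} => [[|[|]]|[|]].
Qed.

Theorem corollary6 (R : realType) (f : {poly int}) (alpha beta : R) (j n d : nat) :
  primitive f ->
  0 < alpha -> alpha < beta ->
  (j <= (size f).-1)%N ->
  (`|f`_j|%:~R * alpha ^+ j >
     (beta / alpha) ^+ ((size f).-1 - j) *
     \sum_(i < (size f).-1.+1 | (i : nat) != j) `|f`_i|%:~R * alpha ^+ i) ->
  (0 < n)%N -> (0 < d)%N ->
  beta - d%:R >= n%:R -> n%:R >= alpha + d%:R ->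
  (d %| (absz f.[n%:Z]))%N ->
  (prime ((absz f.[n%:Z]) %/ d) \/
   (prime_power ((absz f.[n%:Z]) %/ d) /\ coprime ((absz f.[n%:Z]) %/ d) (absz (f^`()).[n%:Z]))) ->
  irreducible_Zz f.
Proof.
(* alpha < beta and 0 < n follow from the bounds on n. *)
move=> prim alpha_gt0 _ j_le dominant _ d_gt0 n_le n_ge d_dvd q_cases.
set q := (absz f.[n%:Z] %/ d)%N in q_cases.
have q_gt1 : (1 < q)%N by case: q_cases => [/prime_gt1 | [/prime_power_gt1]].
split; [|split].
- by apply: contraTneq q_gt1 => f0; rewrite /q f0 horner0 div0n.
- by apply: contraTN q_gt1 => /absz_horner_unit f_n; rewrite /q f_n -leqNgt leq_div.
move=> g h fE.
have [g_le1|g_gt1] := leqP (size g) 1.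
  by left; exact: primitive_constant_factor_unit prim fE g_le1.
have [h_le1|h_gt1] := leqP (size h) 1.
  by right; apply: (primitive_constant_factor_unit prim _ h_le1); rewrite fE mulrC.
exfalso.
have gn_gt := factor_horner_gt alpha_gt0 j_le dominant d_gt0 n_ge n_le fE g_gt1.
have hn_gt := factor_horner_gt alpha_gt0 j_le dominant d_gt0 n_ge n_le
  (etrans fE (mulrC g h)) h_gt1.
have qdE : (q * d = `|g.[n%:Z]| * `|h.[n%:Z]|)%N by rewrite divnK // -abszM -hornerM -fE.
case: q_cases => [q_prime | [[p [k [p_prime [k_gt0 qE]]]] q_coprime]].
- have /andP[q_g _] := prime_power_quotient_dvdn_both d_gt0 gn_gt hn_gt q_prime
    (ltn0Sn 0) ltac:(by rewrite expn1).
  by move: q_g; apply/negP; exact: cofactor_ndvdn d_gt0 gn_gt hn_gt qdE.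
- rewrite qE in qdE q_coprime.
  have /andP[p_g p_h] := prime_power_quotient_dvdn_both d_gt0 gn_gt hn_gt p_prime k_gt0 qdE.
  have : (p %| `|f^`().[n%:Z]|)%N.
    by rewrite -[p]/`|p%:Z|%N -dvdzE fE dvdz_horner_derivM // dvdzE.
  by move: q_coprime; rewrite coprime_pexpl // prime_coprime // => /negP.
Qed.
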